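(* Let $n$ be a positive integer and let $D_{2n}=\langle a,x\mid a^n=e,\ x^2=e,\ xax=a^{-1}\rangle$ be the dihedral group of order $2n$. Then: (1) For every positive integer $m$ with $m\mid n$ and $\gcd(m,\tfrac nm)=1$, $D_{2n}\simeq\mathbb{Z}_m\rtimes_\varphi D_{2n/m}$, where, writing $D_{2n/m}=\langle a,x\mid a^{n/m}=e,x^2=e,xax=a^{-1}\rangle$, the homomorphism $\varphi\colon D_{2n/m}\to\mathrm{Aut}(\mathbb{Z}_m)$ is given by $\varphi(a)(1)=1$ and $\varphi(x)(1)=-1$. (2) If $n$ is even, then $D_{2n}\simeq D_n\rtimes_\varphi\mathbb{Z}_2$, where, writing $D_n=\langle a,x\mid a^{n/2}=e,x^2=e,xax=a^{-1}\rangle$, $\varphi(1)$ is the automorphism of $D_n$ with $\varphi(1)(a)=a^{-1}$ and $\varphi(1)(x)=ax$. (3) If $2\mid n$ and $4\nmid n$, then $D_{2n}\simeq D_n\times\mathbb{Z}_2$. (4) If $D_{2n}\simeq X\rtimes Y$ for some groups $X,Y$ with $|X|>1$, $|Y|>1$ and some semidirect product structure, then either (a) $X\simeq\mathbb{Z}_m$ and $Y\simeq D_{2n/m}$ for some $m\mid n$ with $\gcd(m,\tfrac nm)=1$, or (b) $2\mid n$, $X\simeq D_n$ and $Y\simeq\mathbb{Z}_2$.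
   Context: $D_{2k}$ denotes the dihedral group of order $2k$ (so $D_2\simeq\mathbb{Z}_2$, $D_4\simeq\mathbb{Z}_2\times\mathbb{Z}_2$). $\mathbb{Z}_m=\langle 1\rangle$ is the cyclic group of order $m$ written additively. For groups $N,H$ and a homomorphism $\varphi\colon H\to\mathrm{Aut}(N)$, $N\rtimes_\varphi H$ is $N\times H$ with product $(n_1,h_1)(n_2,h_2)=(n_1\varphi(h_1)(n_2),h_1h_2)$; a direct product counts as a semidirect product with trivial $\varphi$. *)

From HB Require Import structures.
From mathcomp Require Import all_boot all_order all_algebra.
From mathcomp Require Import fingroup morphism perm automorphism gproduct.
Set Implicit Arguments.
Unset Strict Implicit.
Unset Printing Implicit Defensive.
Import GRing.Theory.

(* Z_m : the cyclic group of order m (m >= 1), written additively.     *)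
(* It is the additive group of 'I_m (mathcomp's Z/mZ on ordinals);     *)
(* for m >= 1, 'I_(m.-1).+1 is literally 'I_m.                         *)
(* Its canonical generator "1" is Zp1.                                  *)
Definition Zmod (m : nat) : finGroupType := 'I_(m.-1).+1.

(* D_{2k} : the dihedral group of order 2k (k >= 1), concretely        *)
(* elements (i, s) standing for a^i x^s, i in Z_k, s in {0,1}, with     *)
(* (i,s)(j,t) = (i + (-1)^s j, s+t).                                    *)
Section Dihedral.
Variable k : nat.
Local Notation Zk := 'I_(k.-1).+1.

Definition dihedral : predArgType := (Zk * bool)%type.
HB.instance Definition _ := Finite.on dihedral.

Definition dih_mul (u v : dihedral) : dihedral :=
  ((u.1 + (if u.2 then - v.1 else v.1))%R, u.2 (+) v.2).
Definition dih_one : dihedral := (0%R, false).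
Definition dih_inv (u : dihedral) : dihedral :=
  ((if u.2 then u.1 else - u.1)%R, u.2).

Lemma dih_mulA : associative dih_mul.
Proof.
move=> [i s] [j t] [l r]; rewrite /dih_mul /=.
congr pair; last by rewrite addbA.
case: s; case: t => /=.
all: by rewrite ?opprD ?opprK addrA.
Qed.

Lemma dih_mul1 : left_id dih_one dih_mul.
Proof. by move=> [i s]; rewrite /dih_mul /= add0r. Qed.

Lemma dih_mulV : left_inverse dih_one dih_inv dih_mul.
Proof.
move=> [i s]; rewrite /dih_mul /dih_one /=; case: s => /=.
  by rewrite subrr.
by rewrite addNr.
Qed.

HB.instance Definition _ := Finite_isGroup.Build dihedral dih_mulA dih_mul1 dih_mulV.

Definition dih_a : dihedral := (Zp1, false).
Definition dih_x : dihedral := (0%R, true).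

End Dihedral.

(* External semidirect product N ⋊_φ H for a homomorphism             *)
(* φ : H -> Aut(N): each φ h is a bijective group morphism of N, and   *)
(* φ (h1 h2) = φ h1 ∘ φ h2.                                            *)
Record sdaction (N H : finGroupType) := SdAction {
  sdact :> H -> N -> N;
  sdact_morph : forall h, {morph sdact h : x y / (x * y)%g};
  sdact_bij : forall h, bijective (sdact h);
  sdact_mul : forall h1 h2 x, sdact (h1 * h2)%g x = sdact h1 (sdact h2 x)
}.

(* the carrier of N ⋊_φ H : pairs (n, h); depends on φ through its instances *)
Definition semidirect (N H : finGroupType) (phi : sdaction N H) : predArgType :=
  (N * H)%type.

Section SemiDirect.
Variables (N H : finGroupType) (phi : sdaction N H).
Local Open Scope group_scope.

Lemma sdact1g (x : N) : phi 1 x = x.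
Proof.
have [g phiK Kphi] := sdact_bij phi 1.
by rewrite -[x in RHS]Kphi -[in RHS](mulg1 1) sdact_mul Kphi.
Qed.

Lemma sdact_1 (h : H) : phi h 1 = 1.
Proof.
have /(congr1 (fun y => y * (phi h 1)^-1)) := sdact_morph phi h 1 1.
by rewrite mulg1 mulgK => <-; rewrite mulgV.
Qed.

Lemma sdact_inv (h : H) (x : N) : phi h x^-1 = (phi h x)^-1.
Proof.
apply/eqP; rewrite eq_sym eq_invg_mul -sdact_morph mulgV; exact/eqP/sdact_1.
Qed.

Local Notation sdT := (semidirect phi).
HB.instance Definition _ := Finite.on sdT.

Definition sd_mul (u v : sdT) : sdT :=
  (u.1 * phi u.2 v.1, u.2 * v.2).
Definition sd_one : sdT := (1, 1).
Definition sd_inv (u : sdT) : sdT :=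
  (phi u.2^-1 u.1^-1, u.2^-1).

Lemma sd_mulA : associative sd_mul.
Proof.
move=> [a h] [b g] [c f]; rewrite /sd_mul /=.
by rewrite sdact_morph sdact_mul !mulgA.
Qed.

Lemma sd_mul1 : left_id sd_one sd_mul.
Proof. by move=> [a h]; rewrite /sd_mul /= sdact1g !mul1g. Qed.

Lemma sd_mulV : left_inverse sd_one sd_inv sd_mul.
Proof.
move=> [a h]; rewrite /sd_mul /sd_inv /sd_one /=.
by rewrite -sdact_morph !mulVg sdact_1.
Qed.

HB.instance Definition _ := Finite_isGroup.Build sdT sd_mulA sd_mul1 sd_mulV.

End SemiDirect.

(* A group of order 2k generated by an element r of order k and an involution
   s outside <[r]> with s r s = r^-1 is dihedral of order 2k; parts (1)-(3)
   exhibit such a pair r, s in the proposed products.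
   For (4), an isomorphism D_2n ~ X |x Y yields an internal decomposition
   K |x L = D_2n with K ~ X and L ~ Y. If K consists of rotations, it is
   cyclic of order m and L contains a reflection, so L is dihedral with
   rotation subgroup L :&: <[a]> of order n/m; this meets K trivially inside
   the cyclic group <[a]>, whence gcd(m, n/m) = 1. If K contains a reflection,
   then by normality it contains a^2, so K :&: <[a]> has index at most 2 in
   <[a]>; since L is nontrivial the index is 2, n is even, K ~ D_n and L has
   order 2. *)

From HB Require Import structures.
From mathcomp Require Import all_boot all_order all_algebra all_fingroup cyclic zify.
Set Implicit Arguments.
Unset Strict Implicit.
Unset Printing Implicit Defensive.
Import GRing.Theory.
Local Open Scope group_scope.

Lemma order_dvdn_eq (gT : finGroupType) (r : gT) N :
  (forall j, (r ^+ j == 1) = (N %| j)) -> #[r] = N.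
Proof. by move=> rX; apply/eqP; rewrite eqn_dvd order_dvdn rX dvdnn /= -rX expg_order. Qed.

Lemma cyclic_TI_coprime (gT : finGroupType) (C A B : {group gT}) :
  cyclic C -> A \subset C -> B \subset C -> A :&: B = 1 -> coprime #|A| #|B|.
Proof.
move=> cycC sAC sBC tiAB.
have cAB : B \subset 'C(A).
  exact: subset_trans sBC (subset_trans (cyclic_abelian cycC) (centS sAC)).
rewrite -(cyclic_dprod (dprodEY cAB tiAB)) ?(cyclicS sAC) ?(cyclicS sBC) //.
by apply: cyclicS cycC; rewrite join_subG sAC.
Qed.

Lemma card_Zmod m : #|[set: Zmod m]| = (m.-1).+1.
Proof. by rewrite cardsT card_ord. Qed.

Lemma cyclic_Zmod m : cyclic [set: Zmod m].
Proof. by rewrite /Zmod Zp_cycle cycle_cyclic. Qed.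

Lemma isog_Zmod (gT : finGroupType) (H : {group gT}) :
  cyclic H -> H \isog [set: Zmod #|H|].
Proof. by move=> cycH; rewrite isog_cyclic_card // cyclic_Zmod /= card_Zmod prednK ?cardG_gt0. Qed.

Lemma expg_ZpD (gT : finGroupType) p (r : gT) (rp : r ^+ p.+1 = 1) (i j : 'I_p.+1) :
  r ^+ (i + j)%R = r ^+ i * r ^+ j.
Proof. by rewrite -expgD -[in RHS](expg_mod _ rp). Qed.

Lemma expg_ZpN (gT : finGroupType) p (r : gT) (rp : r ^+ p.+1 = 1) (j : 'I_p.+1) :
  r ^+ (- j)%R = (r ^+ j)^-1.
Proof.
apply/eqP; rewrite eq_mulgV1 invgK -expgD -(expg_mod _ rp).
by rewrite /= modnDml subnK ?modnn ?expg0 // ltnW.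
Qed.

Lemma inj_morph_isog (aT rT : finGroupType) (H : {group rT}) (f : aT -> rT) :
  {morph f : x y / x * y} -> injective f -> (forall x, f x \in H) ->
  #|aT| = #|H| -> [set: aT] \isog H.
Proof.
move=> fM finj fH cardH.
have fM' : {in [set: aT] &, {morph f : x y / x * y}} by move=> x y _ _; exact: fM.
have injf : 'injm (Morphism fM') by apply/injmP => x y _ _; exact: finj.
apply/isogP; exists (Morphism fM') => //; apply/eqP; rewrite eqEcard.
rewrite card_injm // cardsT cardH leqnn andbT.
by apply/subsetP => _ /morphimP[x _ _ ->]; exact: fH.
Qed.

Section DihedralElements.
Variable k : nat.
Local Notation a := (dih_a k).

Lemma dih_mul_fst (u v : dihedral k) :
  (u * v).1 = (u.1 + (if u.2 then - v.1 else v.1))%R.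
Proof. by []. Qed.

Lemma dih_mul_snd (u v : dihedral k) : (u * v).2 = u.2 (+) v.2.
Proof. by []. Qed.

Lemma dih_mulE (i j : 'I_(k.-1).+1) b c :
  ((i, b) : dihedral k) * (j, c) = ((i + (if b then - j else j))%R, b (+) c).
Proof. by []. Qed.

Lemma dih_inv_snd (u : dihedral k) : (u^-1).2 = u.2.
Proof. by []. Qed.

Lemma dih_aX j : a ^+ j = (inZp j, false).
Proof.
elim: j => [|j IHj]; first by congr pair; apply: val_inj; rewrite /= mod0n.
by rewrite expgSr IHj; congr pair; apply: val_inj; rewrite /= modnDm addn1.
Qed.

Lemma dih_aX_snd j : (a ^+ j).2 = false.
Proof. by rewrite dih_aX. Qed.

Lemma dih_aX_eq1 j : (a ^+ j == 1) = ((k.-1).+1 %| j).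
Proof. by rewrite dih_aX xpair_eqE andbT -val_eqE. Qed.

Lemma order_dih_a : #[a] = (k.-1).+1.
Proof. by apply: order_dvdn_eq => j; rewrite dih_aX_eq1. Qed.

Lemma mem_dih_rot (u : dihedral k) : (u \in <[a]>) = ~~ u.2.
Proof.
case: u => i b; apply/cycleP/idP => [[j ->] | /= b_false].
  by rewrite dih_aX.
exists i; rewrite dih_aX (negbTE b_false); congr pair.
by apply: val_inj; rewrite /= modn_small.
Qed.

Lemma dih_reflK (s : dihedral k) : s.2 -> s * s = 1.
Proof. by case: s => i [] //= _; congr pair; rewrite /= subrr. Qed.

Lemma dih_refl_conj (s r : dihedral k) : s.2 -> ~~ r.2 -> s * r * s = r^-1.
Proof.
case: s => i [] //; case: r => j [] // _ _; congr pair.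
by rewrite /= addrAC subrr add0r.
Qed.

Lemma dih_refl_mulJ (s : dihedral k) : s.2 -> s * s ^ a = a ^+ 2.
Proof.
case: s => i [] // _; rewrite /conjg expgS expg1; congr pair.
by rewrite /= opprD opprK opprB addrA addrC addrA addrNK.
Qed.

End DihedralElements.

Lemma isog_dihedral (gT : finGroupType) (H : {group gT}) (k : nat) (r s : gT) :
  0 < k -> #[r] = k -> s * s = 1 -> s * r * s = r^-1 ->
  r \in H -> s \in H -> s \notin <[r]> -> #|H| = k.*2 ->
  [set: dihedral k] \isog H.
Proof.
move=> k_gt0 ordr ss srs rH sH s_notr cardH.
have {}ordr : #[r] = (k.-1).+1 by rewrite prednK.
have rk : r ^+ (k.-1).+1 = 1 by rewrite -ordr expg_order.
have sV : s^-1 = s by apply/eqP; rewrite eq_invg_mul ss.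
have rs : r ^ s = r^-1 by rewrite /conjg sV mulgA.
have sX j : s * r ^+ j = (r ^+ j)^-1 * s.
  by rewrite -expgVn -rs -conjXg /conjg sV !mulgA -(mulgA _ s s) ss mulg1.
pose f (u : dihedral k) := r ^+ u.1 * (if u.2 then s else 1).
apply: (@inj_morph_isog _ _ H f).
- move=> u v; rewrite /f dih_mul_fst dih_mul_snd.
  case: u.2; cbv beta iota; rewrite ?addTb ?addFb (expg_ZpD rk); last first.
    by rewrite mulg1 mulgA.
  rewrite (expg_ZpN rk) -!mulgA (mulgA s) sX -!mulgA.
  by case: v.2; rewrite /= ?ss ?mulg1.
- have r_inj (i j : 'I_(k.-1).+1) : r ^+ i = r ^+ j -> i = j.
    by move/eqP; rewrite eq_expg_mod_order ordr !modn_small // => /eqP/val_inj.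
  have rs_neq_r (i j : nat) : r ^+ i * s <> r ^+ j.
    move=> E; case/negP: s_notr.
    by rewrite -(mulKg (r ^+ i) s) E groupM ?groupV ?mem_cycle.
  move=> [i b] [j c]; rewrite /f /=.
  case: b; case: c; rewrite ?mulg1 => E.
  + by rewrite (r_inj _ _ (mulIg _ _ _ E)).
  + by case: (rs_neq_r _ _ E).
  + by case: (rs_neq_r _ _ (esym E)).
  + by rewrite (r_inj _ _ E).
- by move=> [i b]; rewrite /f; case: b; rewrite groupM ?groupX.
- by rewrite cardH card_prod card_ord card_bool prednK // muln2.
Qed.

Section DihedralSubgroups.
Variables (k : nat) (L : {group dihedral k}) (s : dihedral k).
Hypotheses (sL : s \in L) (s_refl : s.2).
Local Notation a := (dih_a k).

Lemma card_dih_refl_subgroup : #|L| = (#|L :&: <[a]>|).*2.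
Proof.
have mulLR : L * <[a]> = setT.
  apply/setP => u; rewrite inE; case: (boolP u.2) => u_refl.
    by rewrite -(mulKVg s u) mem_mulg // mem_dih_rot dih_mul_snd dih_inv_snd s_refl u_refl.
  by rewrite -[u]mul1g mem_mulg // mem_dih_rot.
have := mul_cardG L <[a]>.
rewrite mulLR cardsT card_prod card_ord card_bool -orderE order_dih_a.
by rewrite mulnC -mulnA => /eqP; rewrite eqn_pmul2l // mulnC muln2 => /eqP.
Qed.

Lemma isog_dih_refl_subgroup : L \isog [set: dihedral #|L :&: <[a]>|].
Proof.
have [r defL0] := cyclicP (cyclicS (subsetIr L <[a]>) (cycle_cyclic a)).
have /setIP[rL] : r \in L :&: <[a]> by rewrite defL0 cycle_id.
rewrite mem_dih_rot => r_rot; rewrite isog_sym; apply: (@isog_dihedral _ _ _ r s) => //.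
- by rewrite -[RHS]/#|(L :&: <[a]>)%G| defL0.
- exact: dih_reflK.
- exact: dih_refl_conj.
- by rewrite -defL0 !inE mem_dih_rot s_refl andbF.
- exact: card_dih_refl_subgroup.
Qed.

End DihedralSubgroups.

Section DihedralSdprod.
Variables (k : nat) (K L : {group dihedral k}).
Hypotheses (k_gt0 : 0 < k) (defD : K ><| L = setT).
Local Notation a := (dih_a k).

Lemma card_dih_sdprod : (#|K| * #|L|)%N = k.*2.
Proof. by rewrite (sdprod_card defD) cardsT card_prod card_ord card_bool prednK // muln2. Qed.

Lemma dih_sdprod_rot_normal :
    K \subset <[a]> ->
  exists m, [/\ m %| k, coprime m (k %/ m),
    K \isog [set: Zmod m] & L \isog [set: dihedral (k %/ m)]].
Proof.
move=> sKR; have [_ _ mulKL _ tiKL] := sdprod_context defD.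
have card_rot : #|<[a]>| = k by rewrite -orderE order_dih_a prednK.
have [s sL s_refl] : exists2 s, s \in L & s.2.
  have : ~~ (L \subset <[a]>).
    apply/negP => sLR; have := subset_leq_card (mul_subG sKR sLR).
    by rewrite mulKL cardsT card_prod card_ord card_bool card_rot prednK //; lia.
  by case/subsetPn => s sL; rewrite mem_dih_rot negbK; exists s.
have cardL := card_dih_refl_subgroup sL s_refl.
have coKL0 : coprime #|K| #|L :&: <[a]>|.
  apply: cyclic_TI_coprime (cycle_cyclic a) sKR (subsetIr _ _) _.
  by rewrite setIA tiKL setI1g.
have kE : k = (#|K| * #|L :&: <[a]>|)%N by have := card_dih_sdprod; rewrite cardL; lia.
have k_div : k %/ #|K| = #|L :&: <[a]>| by rewrite {1}kE mulKn.
exists #|K|; rewrite k_div; split => //.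
- by apply/dvdnP; exists #|L :&: <[a]>|; rewrite mulnC -kE.
- exact: isog_Zmod (cyclicS sKR (cycle_cyclic a)).
- exact: isog_dih_refl_subgroup sL s_refl.
Qed.

Lemma dih_sdprod_refl_normal s :
    1 < #|L| -> s \in K -> s.2 ->
  [/\ 2 %| k, K \isog [set: dihedral (k %/ 2)] & L \isog [set: Zmod 2]].
Proof.
move=> L_gt1 sK s_refl; have [nKD _ _ _ _] := sdprod_context defD.
(* K is normal, so it contains s * s^a = a^2: its rotations have index at most 2 in <[a]>. *)
have a2K : a ^+ 2 \in K.
  by rewrite -(dih_refl_mulJ s_refl) groupM // memJ_norm // (subsetP (normal_norm nKD)) ?inE.
have isoK := isog_dih_refl_subgroup sK s_refl.
have cardKL := card_dih_sdprod; rewrite (card_dih_refl_subgroup sK s_refl) in cardKL.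
have ord_a : #[a] = k by rewrite order_dih_a prednK.
have a2_dvd : #[a ^+ 2] %| #|K :&: <[a]>|.
  by rewrite orderE cardSg // cycle_subG inE a2K mem_cycle.
rewrite orderXgcd ord_a in a2_dvd.
have c_gt0 : 0 < #|K :&: <[a]>| by apply: (cardG_gt0 (K :&: <[a]>)%G).
set c := #|K :&: <[a]>| in isoK cardKL a2_dvd c_gt0.
have c_lt : c < k by nia.
have k_even : 2 %| k.
  apply: contraLR c_lt => k_odd; rewrite -leqNgt dvdn_leq //.
  have /eqP k2 : coprime k 2 by rewrite coprime_sym prime_coprime.
  by rewrite k2 divn1 in a2_dvd.
rewrite (gcdn_idPr k_even) in a2_dvd.
have cE : c = k %/ 2.
  case/dvdnP: a2_dvd => q cq.
  have [q_gt0 h_gt0] : 0 < q /\ 0 < k %/ 2 by apply/andP; rewrite -muln_gt0 -cq.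
  have q_lt2 : q < 2 by rewrite -(ltn_pmul2r h_gt0) -cq mul2n -muln2 divnK.
  have q1 : q = 1%N by lia.
  by rewrite cq q1 mul1n.
have cardL : #|L| = 2.
  rewrite cE -muln2 divnK // in cardKL.
  by apply/eqP; rewrite -(eqn_pmul2l k_gt0) cardKL muln2.
split => //; first by rewrite -cE.
by rewrite -cardL isog_Zmod // prime_cyclic // cardL.
Qed.

Lemma dih_sdprod_classification :
    1 < #|L| ->
  (exists m, [/\ m %| k, coprime m (k %/ m),
     K \isog [set: Zmod m] & L \isog [set: dihedral (k %/ m)]])
  \/ [/\ 2 %| k, K \isog [set: dihedral (k %/ 2)] & L \isog [set: Zmod 2]].
Proof.
move=> L_gt1; case: (boolP (K \subset <[a]>)) => [sKR | /subsetPn[s sK]].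
  by left; apply: dih_sdprod_rot_normal.
by rewrite mem_dih_rot negbK => s_refl; right; apply: (dih_sdprod_refl_normal L_gt1 sK).
Qed.

End DihedralSdprod.

Section SemidirectFactors.
Variables (N H : finGroupType) (phi : sdaction N H).
Local Notation S := (semidirect phi).

Lemma sd_mulE (x1 x2 : N) (h1 h2 : H) :
  ((x1, h1) : S) * (x2, h2) = (x1 * phi h1 x2, h1 * h2).
Proof. by []. Qed.

Lemma sd_oneE : (1 : S) = (1, 1).
Proof. by []. Qed.

Lemma sd_invE (x : N) (h : H) : ((x, h) : S)^-1 = (phi h^-1 x^-1, h^-1).
Proof. by []. Qed.

Lemma sd_inl_morphM : {in [set: N] &, {morph (fun x => (x, 1) : S) : x y / x * y}}.
Proof. by move=> x y _ _ /=; rewrite sd_mulE sdact1g mulg1. Qed.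

Lemma sd_inr_morphM : {in [set: H] &, {morph (fun h => (1, h) : S) : g h / g * h}}.
Proof. by move=> g h _ _ /=; rewrite sd_mulE sdact_1 mulg1. Qed.

Lemma sd_proj_morphM : {in [set: S] &, {morph (fun u : S => u.2) : u v / u * v}}.
Proof. by []. Qed.

Definition sd_inl := Morphism sd_inl_morphM.
Definition sd_inr := Morphism sd_inr_morphM.
Definition sd_proj := Morphism sd_proj_morphM.

Lemma sd_expg_inl (x : N) j : ((x, 1) : S) ^+ j = (x ^+ j, 1).
Proof. by elim: j => // j IHj; rewrite !expgSr IHj /= sd_mulE sdact1g mulg1. Qed.

Lemma sd_expg_snd (u : S) j : (u ^+ j).2 = u.2 ^+ j.
Proof. by elim: j => // j IHj; rewrite !expgSr -IHj. Qed.

Lemma injm_sd_inl : 'injm sd_inl.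
Proof. by apply/injmP => x y _ _ []. Qed.

Lemma injm_sd_inr : 'injm sd_inr.
Proof. by apply/injmP => g h _ _ []. Qed.

Lemma ker_sd_proj : 'ker sd_proj = sd_inl @* setT.
Proof.
apply/setP => -[x h]; apply/idP/morphimP.
  by move/kerP => /(_ (in_setT _)) /= ->; exists x; rewrite ?inE.
by case=> y _ _ [_ ->]; apply/kerP; rewrite ?inE.
Qed.

Lemma semidirect_sdprod : sd_inl @* setT ><| sd_inr @* setT = setT.
Proof.
rewrite sdprodE.
- apply/eqP; rewrite eqEsubset subsetT /=; apply/subsetP => -[x h] _.
  have -> : ((x, h) : S) = ((x, 1) : S) * ((1, h) : S) by rewrite sd_mulE sdact_1 mulg1 mul1g.
  by apply: mem_mulg; apply/morphimP; [exists x | exists h]; rewrite ?inE.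
- by rewrite /= -ker_sd_proj; apply: subset_trans (subsetT _) (ker_norm _).
apply/trivgP/subsetP => _ /setIP[/morphimP[x _ _ ->] /morphimP[h _ _ /= [-> _]]].
by rewrite inE.
Qed.

End SemidirectFactors.

Lemma dih_semidirect_factors n (X Y : finGroupType) (phi : sdaction X Y) :
    0 < n -> 1 < #|Y| -> [set: dihedral n] \isog [set: semidirect phi] ->
  (exists m : nat, [/\ m %| n, coprime m (n %/ m),
     [set: X] \isog [set: Zmod m] & [set: Y] \isog [set: dihedral (n %/ m)]])
  \/ [/\ 2 %| n, [set: X] \isog [set: dihedral (n %/ 2)] & [set: Y] \isog [set: Zmod 2]].
Proof.
move=> n_gt0 Y_gt1; rewrite isog_sym => /isogP[f injf imf].
have defD : f @* (sd_inl phi @* setT) ><| f @* (sd_inr phi @* setT) = setT.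
  by rewrite -imf; apply: injm_sdprod (semidirect_sdprod phi).
have isoX : [set: X] \isog f @* (sd_inl phi @* setT).
  exact: isog_trans (sub_isog (subsetT _) (injm_sd_inl phi)) (sub_isog (subsetT _) injf).
have isoY : [set: Y] \isog f @* (sd_inr phi @* setT).
  exact: isog_trans (sub_isog (subsetT _) (injm_sd_inr phi)) (sub_isog (subsetT _) injf).
have Y'_gt1 : 1 < #|f @* (sd_inr phi @* setT)| by rewrite -(card_isog isoY) cardsT.
case: (dih_sdprod_classification n_gt0 defD Y'_gt1) => [[m [mn co iX iY]] | [n2 iX iY]].
  by left; exists m; split; [| | exact: isog_trans isoX iX | exact: isog_trans isoY iY].
by right; split; [| exact: isog_trans isoX iX | exact: isog_trans isoY iY].
Qed.

Section ReflectionInversion.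
Variables (m d : nat).

Definition refl_inv (u : dihedral d) (z : Zmod m) : Zmod m := if u.2 then z^-1 else z.

Lemma refl_inv_morph u : {morph refl_inv u : y z / y * z}.
Proof. by move=> y z; rewrite /refl_inv; case: u.2; rewrite // invMg; apply: Zp_addC. Qed.

Lemma refl_inv_bij u : bijective (refl_inv u).
Proof. by exists (refl_inv u) => z; rewrite /refl_inv; case: u.2; rewrite ?invgK. Qed.

Lemma refl_inv_mul u v z : refl_inv (u * v) z = refl_inv u (refl_inv v z).
Proof. by rewrite /refl_inv dih_mul_snd; case: u.2; case: v.2; rewrite ?invgK. Qed.

Definition refl_inv_action := SdAction refl_inv_morph refl_inv_bij refl_inv_mul.

Lemma refl_inv_actionE u z : refl_inv_action u z = if u.2 then z^-1 else z.
Proof. by []. Qed.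

End ReflectionInversion.

Lemma dih_isog_semidirect_Zmod n m :
    0 < n -> 0 < m -> m %| n -> coprime m (n %/ m) ->
  [set: dihedral n] \isog [set: semidirect (refl_inv_action m (n %/ m))].
Proof.
move=> n_gt0 m_gt0 mn co; set d := n %/ m.
have d_gt0 : 0 < d by rewrite divn_gt0 // dvdn_leq.
have nE : n = (m * d)%N by rewrite mulnC divnK.
pose r : semidirect (refl_inv_action m d) := (Zp1, dih_a d).
pose s : semidirect (refl_inv_action m d) := (1, dih_x d).
have rX j : r ^+ j = (Zp1 ^+ j, dih_a d ^+ j).
  elim: j => [|j IHj] //.
  by rewrite expgSr IHj /r /= sd_mulE refl_inv_actionE dih_aX_snd -!expgSr.
have ord_r : #[r] = n.
  apply: order_dvdn_eq => j; rewrite rX xpair_eqE -order_dvdn order_Zp1 dih_aX_eq1.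
  by rewrite !prednK // nE Gauss_dvd.
apply: (@isog_dihedral _ _ n r s); rewrite ?inE //.
- by rewrite /s /= sd_mulE refl_inv_actionE /= invg1 mulg1 dih_reflK.
- by rewrite /s /r /= !sd_mulE !refl_inv_actionE /= invg1 !mulg1 mul1g dih_refl_conj.
- apply/cycleP => -[j]; rewrite rX /s => /(congr1 (fun u => u.2.2)).
  by rewrite dih_aX.
- by rewrite cardsT !card_prod !card_ord card_bool !prednK // nE -muln2 mulnA.
Qed.

Section DihedralFlip.
Variable h : nat.

(* a^i x^b |-> a^-i (a x)^b, i.e. a |-> a^-1 and x |-> a x. *)
Definition dih_flip (u : dihedral h) : dihedral h :=
  ((if u.2 then Zp1 - u.1 else - u.1)%R, u.2).

Lemma dih_flip_morph : {morph dih_flip : u v / u * v}.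
Proof.
move=> [i b] [j c]; rewrite /dih_flip /= !dih_mulE; congr pair.
case: b; case: c => /=.
- by rewrite !opprB [RHS]addrC addrA subrK.
- by rewrite opprK opprB addrA addrAC.
- by rewrite opprD addrCA.
- by rewrite opprD.
Qed.

Lemma dih_flipK : involutive dih_flip.
Proof.
move=> [i b]; rewrite /dih_flip /=; congr pair.
by case: b; rewrite ?opprK // opprB addrC subrK.
Qed.

Definition flip_act (t : Zmod 2) u := if t == Zp1 then dih_flip u else u.

Lemma flip_act_morph t : {morph flip_act t : u v / u * v}.
Proof. by rewrite /flip_act; case: (t == Zp1); [exact: dih_flip_morph |]. Qed.

Lemma flip_act_bij t : bijective (flip_act t).
Proof. by exists (flip_act t) => u; rewrite /flip_act; case: (t == Zp1); rewrite ?dih_flipK. Qed.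

Lemma flip_act_mul t1 t2 u : flip_act (t1 * t2) u = flip_act t1 (flip_act t2 u).
Proof. by case: t1 t2 => -[|[|//]] ? [[|[|//]] ?]; rewrite /flip_act //= dih_flipK. Qed.

Definition flip_action := SdAction flip_act_morph flip_act_bij flip_act_mul.

Lemma flip_actionE t u : flip_action t u = if t == Zp1 then dih_flip u else u.
Proof. by []. Qed.

End DihedralFlip.

Lemma dih_isog_semidirect_Z2 n :
  0 < n -> 2 %| n -> [set: dihedral n] \isog [set: semidirect (flip_action (n %/ 2))].
Proof.
move=> n_gt0 n_even; set h := n %/ 2.
have nE : n = (h * 2)%N by rewrite divnK.
have h_gt0 : 0 < h by lia.
pose r : semidirect (flip_action h) := ((Zp1, true), Zp1).
pose s : semidirect (flip_action h) := ((0%R, true), 1).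
have r_sqr : r ^+ 2 = (dih_a h, 1).
  rewrite expgS expg1 /r /= sd_mulE flip_actionE /= dih_mulE subrr subr0.
  by congr pair; apply: val_inj.
have rX2 q : r ^+ (2 * q) = (dih_a h ^+ q, 1).
  by rewrite expgM r_sqr sd_expg_inl.
have rX_snd j : (r ^+ j).2 = Zp1 ^+ j := sd_expg_snd r j.
have ord_r : #[r] = n.
  apply: order_dvdn_eq => j; have [j_even | j_odd] := boolP (2 %| j).
    rewrite -(divnK j_even) mulnC rX2 sd_oneE xpair_eqE eqxx andbT dih_aX_eq1.
    by rewrite prednK // nE mulnC dvdn_pmul2l.
  rewrite (contraNF (dvdn_trans n_even) j_odd); apply/negbTE; apply: contra j_odd.
  by move/eqP/(congr1 snd); rewrite rX_snd => /eqP; rewrite -order_dvdn order_Zp1.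
apply: (@isog_dihedral _ _ n r s); rewrite ?inE //.
- by rewrite /s /= sd_mulE /= dih_reflK // mulg1.
- have Zp1V : (Zp1 : Zmod 2)^-1 = Zp1 by apply: val_inj.
  rewrite /s /r !sd_mulE sd_invE Zp1V sdact1g mul1g mulg1 !flip_actionE eqxx /=.
  by rewrite /dih_flip /= !dih_mulE /= sub0r subr0 addNr subrr.
- apply/cycleP => -[j] sr.
  have /eqP : (r ^+ j).2 = 1 by rewrite -sr.
  rewrite rX_snd -order_dvdn order_Zp1 => j_even.
  by move: sr; rewrite -(divnK j_even) mulnC rX2 => /(congr1 (fun u => u.1.2)); rewrite dih_aX_snd.
- by rewrite cardsT !card_prod !card_ord card_bool !prednK // nE muln2.
Qed.

Lemma dih_isog_prod_Z2 n :
  0 < n -> 2 %| n -> ~~ (4 %| n) -> [set: dihedral n] \isog [set: (dihedral (n %/ 2) * Zmod 2)%type].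
Proof.
move=> n_gt0 n_even n_not4; set h := n %/ 2.
have nE : n = (h * 2)%N by rewrite divnK.
have h_gt0 : 0 < h by lia.
have h_odd : ~~ (2 %| h) by apply: contra n_not4; rewrite nE -[4]/(2 * 2)%N dvdn_pmul2r.
pose r : (dihedral h * Zmod 2)%type := (dih_a h, Zp1).
pose s : (dihedral h * Zmod 2)%type := (dih_x h, 1).
have rX j : r ^+ j = (dih_a h ^+ j, Zp1 ^+ j).
  by elim: j => // j IHj; rewrite !expgSr IHj.
have ord_r : #[r] = n.
  apply: order_dvdn_eq => j; rewrite rX xpair_eqE dih_aX_eq1 -order_dvdn order_Zp1.
  by rewrite prednK // nE Gauss_dvd // coprime_sym prime_coprime.
apply: (@isog_dihedral _ _ n r s); rewrite ?inE //.
- by congr pair; rewrite /= ?dih_reflK ?mulg1.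
- by congr pair; [rewrite /= dih_refl_conj | apply: val_inj].
- by apply/cycleP => -[j]; rewrite rX /s => /(congr1 (fun u => u.1.2)); rewrite dih_aX_snd.
- by rewrite cardsT !card_prod !card_ord card_bool !prednK // nE muln2.
Qed.

Theorem mainTheorem4 (n : nat) (n_gt0 : 0 < n) :
  (* (1) *)
  (forall m : nat, 0 < m -> m %| n -> coprime m (n %/ m) ->
     exists phi : sdaction (Zmod m) (dihedral (n %/ m)),
       [/\ phi (dih_a (n %/ m)) Zp1 = Zp1,
           phi (dih_x (n %/ m)) Zp1 = Zp_opp Zp1
         & [set: dihedral n] \isog [set: semidirect phi]])
  /\
  (* (2) *)
  (2 %| n ->
     exists phi : sdaction (dihedral (n %/ 2)) (Zmod 2),
       [/\ phi Zp1 (dih_a (n %/ 2)) = (dih_a (n %/ 2))^-1,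
           phi Zp1 (dih_x (n %/ 2)) = dih_a (n %/ 2) * dih_x (n %/ 2)
         & [set: dihedral n] \isog [set: semidirect phi]])
  /\
  (* (3) *)
  (2 %| n -> ~~ (4 %| n) ->
     [set: dihedral n] \isog [set: (dihedral (n %/ 2) * Zmod 2)%type])
  /\
  (* (4) *)
  (forall (X Y : finGroupType) (phi : sdaction X Y),
     1 < #|X| -> 1 < #|Y| ->
     [set: dihedral n] \isog [set: semidirect phi] ->
     (exists m : nat,
        [/\ m %| n, coprime m (n %/ m),
            [set: X] \isog [set: Zmod m]
          & [set: Y] \isog [set: dihedral (n %/ m)]])
     \/
     [/\ 2 %| n, [set: X] \isog [set: dihedral (n %/ 2)]
       & [set: Y] \isog [set: Zmod 2]]).
Proof.
split.
  move=> m m_gt0 m_dvd co; exists (refl_inv_action m (n %/ m)).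
  by split; last exact: dih_isog_semidirect_Zmod.
split.
  move=> n_even; exists (flip_action (n %/ 2)).
  split; last exact: dih_isog_semidirect_Z2.
  - by [].
  - by rewrite flip_actionE eqxx /dih_flip /= dih_mulE subr0 addr0.
split; first exact: dih_isog_prod_Z2.
by move=> X Y phi _ Y_gt1; exact: dih_semidirect_factors.
Qed.
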